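(* Let $N\geq 2$ and let $\Sigma$ be the two-sided shift on $\{0,1,\dots,N-1\}^{\mathbb{Z}}$, ordered lexicographically as described below. Then $\Sigma$ has no forbidden order patterns of length $L\leq N-1$, and $\Sigma$ has forbidden order patterns of every length $L\geq N+2$.
   Context: $\{0,1,\dots,N-1\}^{\mathbb{Z}}$ is the set of bisequences $\omega=(\omega_n)_{n\in\mathbb{Z}}$ with $\omega_n\in\{0,\dots,N-1\}$, and $\Sigma(\omega)_n=\omega_{n+1}$. One-sided sequences are compared lexicographically ($(a_0,a_1,\dots)<(b_0,b_1,\dots)$ iff at the first index $n$ where they differ, $a_n<b_n$). The order on bisequences: $\omega<\omega'$ iff $(\omega_0,\omega_1,\dots)<(\omega'_0,\omega'_1,\dots)$, or these right sequences are equal and $(\omega_{-1},\omega_{-2},\dots)<(\omega'_{-1},\omega'_{-2},\dots)$. $\mathcal{S}_L$ is the set of permutations $\pi=[\pi_0,\dots,\pi_{L-1}]$ of $\{0,\dots,L-1\}$. $\omega$ defines $\pi$ if $\Sigma^{\pi_0}(\omega)<\dots<\Sigma^{\pi_{L-1}}(\omega)$; $\pi$ is forbidden if no bisequence defines it. *)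

From mathcomp Require Import all_boot ssralg ssrint fingroup perm.
Set Implicit Arguments. Unset Strict Implicit. Unset Printing Implicit Defensive.
Import GRing.Theory.

Definition biseq (N : nat) := int -> 'I_N.

Definition shift (N : nat) (w : biseq N) : biseq N := fun n => w (n + 1)%R.

Definition shiftn (N : nat) (k : nat) (w : biseq N) : biseq N := iter k (@shift N) w.

Definition lex_lt (N : nat) (a b : nat -> 'I_N) : Prop :=
  exists n : nat, (forall m : nat, (m < n)%N -> a m = b m) /\ (a n < b n)%N.

Definition right_part (N : nat) (w : biseq N) : nat -> 'I_N := fun n => w (Posz n).
Definition left_part (N : nat) (w : biseq N) : nat -> 'I_N := fun n => w (- Posz n.+1)%R.

Definition bi_lt (N : nat) (w w' : biseq N) : Prop :=
  lex_lt (right_part w) (right_part w') \/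
  ((forall n : nat, right_part w n = right_part w' n) /\
   lex_lt (left_part w) (left_part w')).

Definition defines (N L : nat) (w : biseq N) (pi : 'S_L) : Prop :=
  forall i j : 'I_L, val j = (val i).+1 ->
    bi_lt (shiftn (val (pi i)) w) (shiftn (val (pi j)) w).

Definition forbidden (N L : nat) (pi : 'S_L) : Prop :=
  ~ exists w : biseq N, defines w pi.

(* Short patterns: for [L < N] let [w_n] be the position of [n] in [pi]; the
   first symbols of the shifts [Sigma^(pi_i) w] are then [0 < 1 < ... < L-1].

   Long patterns: the zig-zag pattern [N, N-2, N-4, ..., N-3, N-1, N+1]
   (down through the indices of the parity of [N], then up through the other
   parity) is forbidden.  Shifting by one maps each consecutive pair of the
   zig-zag to a pair occurring in the reverse order, so consecutive elements
   among its first [N+1] cannot share their first symbol; their first symbols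
   would then form a strictly increasing chain of [N+1] letters out of [N]. *)
From mathcomp Require Import all_boot ssralg ssrint fingroup perm.
From mathcomp Require Import zify.
Set Implicit Arguments. Unset Strict Implicit. Unset Printing Implicit Defensive.
Import GRing.Theory.

Section BisequenceOrder.
Variable N : nat.
Implicit Types (a b c : nat -> 'I_N) (u v x w : biseq N).

Lemma lex_lt_trans a b c : lex_lt a b -> lex_lt b c -> lex_lt a c.
Proof.
move=> [n [abn ab]] [m [bcm bc]]; case: (ltngtP n m) => [nm|mn|eq_nm].
- exists n; split; last by rewrite -(bcm n nm).
  by move=> k kn; rewrite abn // bcm // (ltn_trans kn nm).
- exists m; split; last by rewrite (abn m mn).
  by move=> k km; rewrite abn ?(ltn_trans km mn) // bcm.
- rewrite -eq_nm in bcm bc; exists n; split; last exact: ltn_trans bc.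
  by move=> k kn; rewrite abn // bcm.
Qed.

Lemma lex_lt_eqr a b c : lex_lt a b -> b =1 c -> lex_lt a c.
Proof. by move=> [n [abn ab]] bc; exists n; split=> [k kn|]; rewrite -bc // abn. Qed.

Lemma lex_lt_eql a b c : a =1 b -> lex_lt b c -> lex_lt a c.
Proof. by move=> ab [n [bcn bc]]; exists n; split=> [k kn|]; rewrite ab // bcn. Qed.

Lemma lex_lt_irr a : ~ lex_lt a a.
Proof. by move=> [n [_]]; rewrite ltnn. Qed.

Lemma bi_lt_trans u v x : bi_lt u v -> bi_lt v x -> bi_lt u x.
Proof.
case=> [uv|[Euv uv]] [vx|[Evx vx]].
- by left; apply: lex_lt_trans uv vx.
- by left; apply: lex_lt_eqr uv Evx.
- by left; apply: lex_lt_eql Euv vx.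
- by right; split; [move=> n; rewrite Euv Evx | apply: lex_lt_trans uv vx].
Qed.

Lemma bi_lt_irr u : ~ bi_lt u u.
Proof. by case=> [|[_]]; apply: lex_lt_irr. Qed.

Lemma bi_lt_head u v : right_part u 0 < right_part v 0 -> bi_lt u v.
Proof. by left; exists 0. Qed.

Lemma bi_lt_head_le u v : bi_lt u v -> right_part u 0 <= right_part v 0.
Proof.
case=> [[[|n] [uvn uv]]|[Euv _]]; [exact: ltnW | by rewrite uvn | by rewrite Euv].
Qed.

Lemma shift_right_part w n : right_part (shift w) n = right_part w n.+1.
Proof. by rewrite /right_part /shift -addn1 PoszD. Qed.

Lemma shift_left_part w n : left_part (shift w) n.+1 = left_part w n.
Proof. by rewrite /left_part /shift -[n.+2]addn1 PoszD opprD addrNK. Qed.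

Lemma shift_left_part0 w : left_part (shift w) 0 = right_part w 0.
Proof. by []. Qed.

Lemma bi_lt_shift u v :
  right_part u 0 = right_part v 0 -> bi_lt u v -> bi_lt (shift u) (shift v).
Proof.
move=> uv0; case=> [[[|n] [uvn uv]]|[Euv [n [uvn uv]]]].
- by move: uv; rewrite uv0 ltnn.
- left; exists n; rewrite !shift_right_part; split=> // k kn.
  by rewrite !shift_right_part; apply: uvn.
- right; split=> [k|]; first by rewrite !shift_right_part.
  exists n.+1; rewrite !shift_left_part; split=> // -[|k] kn.
    by rewrite !shift_left_part0.
  by rewrite !shift_left_part; apply: uvn.
Qed.

Lemma shiftnS k w : shift (shiftn k w) = shiftn k.+1 w.
Proof. by rewrite /shiftn iterS. Qed.

Lemma shiftnE k w n : shiftn k w n = w (n + Posz k)%R.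
Proof.
elim: k n => [|k IHk] n; first by rewrite addr0.
by rewrite -shiftnS /shift IHk -addrA -add1n PoszD.
Qed.

Lemma shiftn_head k w : right_part (shiftn k w) 0 = w (Posz k).
Proof. by rewrite /right_part shiftnE add0r. Qed.

End BisequenceOrder.

Lemma defines_lt N L (w : biseq N) (pi : 'S_L) : defines w pi ->
  forall i j : 'I_L, i < j -> bi_lt (shiftn (pi i) w) (shiftn (pi j) w).
Proof.
case: L pi => [|L] pi def_pi i j; first by case: i.
pose f k := shiftn (pi (inord k)) w.
have incr_f : {in [pred k | k < L.+1] &, {homo f : k l / k < l >-> bi_lt k l}}.
  apply: homo_ltn_in => [y x z|k l _ lL m /andP[_ ml]|k _ kSL]; first exact: bi_lt_trans.
    exact: ltn_trans ml lL.
  by apply: def_pi; rewrite /= !inordK // ltnW.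
by have := incr_f i j (ltn_ord i) (ltn_ord j); rewrite /f !inord_val.
Qed.

Lemma no_increasing_chain N (s : nat -> 'I_N) : ~ (forall p, p < N -> s p < s p.+1).
Proof.
move=> s_incr; have s_ge p : p <= N -> p <= s p.
  by elim: p => [|p IHp] // pN; apply: leq_ltn_trans (IHp (ltnW pN)) (s_incr p pN).
by have := leq_ltn_trans (s_ge N (leqnn N)) (ltn_ord (s N)); rewrite ltnn.
Qed.

Definition position_biseq N L (hLN : L < N) (pi : 'S_L) : biseq N := fun n =>
  if insub (absz n) is Some i then widen_ord (ltnW hLN) (pi^-1 i)%g
  else Ordinal (leq_ltn_trans (leq0n L) hLN).

Lemma position_biseq_defines N L (hLN : L < N) (pi : 'S_L) :
  defines (position_biseq hLN pi) pi.
Proof.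
move=> i j ji; apply: bi_lt_head.
by rewrite !shiftn_head /position_biseq /= !valK /= !permK ji.
Qed.

Lemma short_not_forbidden N L (pi : 'S_L) : L < N -> ~ forbidden N pi.
Proof. by move=> hLN; apply; exists (position_biseq hLN pi); apply: position_biseq_defines. Qed.

Section ZigZag.
Variable N : nat.

(* [zigzag p] for [p = 0, ..., N+1] runs through [N, N-2, ..., N-3, N-1, N+1];
   it is the identity beyond. *)
Definition zigzag (p : nat) : nat :=
  if p <= N.+1 then (if 2 * p <= N then N - 2 * p else 2 * p - N.+1) else p.

Definition zigzag_succ (p : nat) : nat := if 2 * p <= N then N.+1 - p else N - p.

Lemma zigzag_inj : injective zigzag.
Proof. by move=> p q; rewrite /zigzag; do ! case: ifP => ?; lia. Qed.

Lemma zigzag_lt L p : N.+2 <= L -> p < L -> zigzag p < L.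
Proof. by rewrite /zigzag; do ! case: ifP => ?; lia. Qed.

Lemma zigzag_succE p : p <= N -> zigzag (zigzag_succ p) = (zigzag p).+1.
Proof.
by move=> pN; rewrite /zigzag_succ; case: ifP => ?; rewrite /zigzag; do ! case: ifP => ?; lia.
Qed.

Lemma zigzag_succ_le p : zigzag_succ p <= N.+1.
Proof. by rewrite /zigzag_succ; case: ifP => ?; lia. Qed.

Lemma zigzag_succ_reverse p : p < N -> zigzag_succ p.+1 < zigzag_succ p.
Proof. by rewrite /zigzag_succ; do ! case: ifP => ?; lia. Qed.

Variables (L : nat) (hNL : N.+2 <= L).

Definition zigzag_ord (i : 'I_L) : 'I_L := Ordinal (zigzag_lt hNL (ltn_ord i)).

Lemma zigzag_ord_inj : injective zigzag_ord.
Proof. by move=> i j /(congr1 val)/zigzag_inj/val_inj. Qed.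

Definition zigzag_perm : 'S_L := perm zigzag_ord_inj.

Lemma zigzag_defines_lt (w : biseq N) : defines w zigzag_perm ->
  forall p q, p < q -> q < L -> bi_lt (shiftn (zigzag p) w) (shiftn (zigzag q) w).
Proof.
move=> def_w p q pq qL; have pL := ltn_trans pq qL.
by have := defines_lt def_w (pq : Ordinal pL < Ordinal qL); rewrite !permE.
Qed.

Lemma zigzag_heads_increase (w : biseq N) : defines w zigzag_perm ->
  forall p, p < N -> w (Posz (zigzag p)) < w (Posz (zigzag p.+1)).
Proof.
move=> def_w p pN; have pSL : p.+1 < L := leq_ltn_trans pN (ltnW hNL).
have lt_p := zigzag_defines_lt def_w (ltnSn p) pSL.
have := bi_lt_head_le lt_p; rewrite leq_eqVlt => /orP[/eqP/val_inj eq_heads|];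
  last by rewrite !shiftn_head.
(* Equal heads survive one shift, which reverses the order of this pair. *)
have := bi_lt_shift eq_heads lt_p.
rewrite !shiftnS -(zigzag_succE (ltnW pN)) -(zigzag_succE pN) => lt_succ.
have gt_succ := zigzag_defines_lt def_w (zigzag_succ_reverse pN)
  (leq_ltn_trans (zigzag_succ_le p) hNL).
by case: (bi_lt_irr (bi_lt_trans lt_succ gt_succ)).
Qed.

Lemma zigzag_perm_forbidden : forbidden N zigzag_perm.
Proof.
by move=> [w /zigzag_heads_increase heads_incr]; apply: no_increasing_chain heads_incr.
Qed.

End ZigZag.

Theorem proposition6 (N : nat) (hN : (2 <= N)%N) :
  (forall (L : nat), (L <= N - 1)%N -> forall pi : 'S_L, ~ forbidden N pi) /\
  (forall (L : nat), (N + 2 <= L)%N -> exists pi : 'S_L, forbidden N pi).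
Proof.
split=> L hL; first by move=> pi; apply: short_not_forbidden; lia.
by rewrite addn2 in hL; exists (zigzag_perm hL); apply: zigzag_perm_forbidden.
Qed.
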